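(* Let $d$ be a prime and let $c_0,\dots,c_7\in\mathbb{Z}_d$. The $d$-state first degree cellular automaton with parameters $\langle c_0,\dots,c_7\rangle$ is reversible for every number of cells $n\in\mathbb{N}$ under the null boundary condition if and only if $c_0=c_1=c_2=c_3=0$, at least one of $c_4=0$ or $c_6=0$ holds, and $\gcd(c_5,d)=1$ (i.e. $c_5\neq 0$); $c_7$ may be arbitrary.
   Context: Fix an integer $d\ge 2$ and the state set $S=\mathbb{Z}_d=\{0,1,\dots,d-1\}$. A first degree cellular automaton (FDCA) with parameters $\langle c_0,\dots,c_7\rangle$, $c_i\in\mathbb{Z}_d$, is the one-dimensional 3-neighborhood cellular automaton whose local rule $R:S^3\to S$ is $R(x,y,z)=c_0xyz+c_1xy+c_2xz+c_3yz+c_4x+c_5y+c_6z+c_7 \pmod d$. For $n\in\mathbb{N}$, $n\ge1$, the $n$-cell automaton under the null boundary condition acts on configurations $x=(x_0,\dots,x_{n-1})\in S^n$ by the global map $G_n:S^n\to S^n$, $G_n(x)_i=R(x_{i-1},x_i,x_{i+1})$ for $0\le i\le n-1$, with the convention $x_{-1}=x_n=0$. The automaton is reversible for a given $n$ if $G_n$ is a bijection. *)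

From HB Require Import structures.
From mathcomp Require Import all_boot all_order all_algebra.
Set Implicit Arguments. Unset Strict Implicit. Unset Printing Implicit Defensive.
Import GRing.Theory.
Local Open Scope ring_scope.

(* States: Z_d (for d >= 2, 'Z_d is exactly Z/dZ). *)

Definition fdca_rule (d : nat) (c0 c1 c2 c3 c4 c5 c6 c7 : 'Z_d)
  (x y z : 'Z_d) : 'Z_d :=
  c0 * x * y * z + c1 * x * y + c2 * x * z + c3 * y * z
  + c4 * x + c5 * y + c6 * z + c7.

Definition config (d n : nat) := {ffun 'I_n -> 'Z_d}.

Definition cell (d n : nat) (x : config d n) (i : nat) : 'Z_d :=
  match insub i with Some j => x j | None => 0 end.

Definition fdca_global (d n : nat) (c0 c1 c2 c3 c4 c5 c6 c7 : 'Z_d)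
  (x : config d n) : config d n :=
  [ffun i : 'I_n =>
     fdca_rule c0 c1 c2 c3 c4 c5 c6 c7
       (if nat_of_ord i is k.+1 then cell x k else 0)
       (x i)
       (cell x (nat_of_ord i).+1)].

Definition fdca_reversible (d n : nat) (c0 c1 c2 c3 c4 c5 c6 c7 : 'Z_d) : Prop :=
  bijective (@fdca_global d n c0 c1 c2 c3 c4 c5 c6 c7).

From mathcomp Require Import all_boot all_order all_algebra.
From mathcomp Require Import ring zify.
Set Implicit Arguments. Unset Strict Implicit. Unset Printing Implicit Defensive.
Import GRing.Theory.
Local Open Scope ring_scope.

(* Sufficiency: without nonlinear terms and with c4 = 0, cell i of the image
   is c5 x_i + c6 x_(i+1) + c7, a triangular system with unit diagonal c5,
   solved from the right end.  Necessity: each violated condition yields two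
   distinct configurations of at most four cells with the same image; when c4
   and c6 are both nonzero, the recurrence c4 x_(i-1) + c5 x_i + c6 x_(i+1) = 0
   is a permutation of Z_d^2, so the orbit of (x_(-1), x_0) = (0, 1) returns to
   (0, 1) and gives a nonzero configuration with the same image as 0.
   Reflecting the cells swaps c1 with c3 and c4 with c6, which halves the case
   analysis. *)

Section Configurations.
Variables d n : nat.

Lemma cell_ord (x : config d n) (i : 'I_n) : cell x i = x i.
Proof. by rewrite /cell valK. Qed.

Lemma cell_out (x : config d n) k : (n <= k)%N -> cell x k = 0.
Proof. by move=> nk; rewrite /cell insubF // ltnNge nk. Qed.

Definition config_of_seq (s : seq 'Z_d) : config d n := [ffun i : 'I_n => s`_i].

Lemma cell_config_of_seq s k : (size s <= n)%N -> cell (config_of_seq s) k = s`_k.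
Proof.
move=> sn; case: (ltnP k n) => [kn | nk].
  by rewrite -[k]/(nat_of_ord (Ordinal kn)) cell_ord ffunE.
by rewrite cell_out // nth_default // (leq_trans sn).
Qed.

Lemma config_of_seq_inj s t : size s = n -> size t = n ->
  config_of_seq s = config_of_seq t -> s = t.
Proof.
move=> sn tn /ffunP st; apply: (@eq_from_nth _ 0) => [|i]; first by rewrite sn tn.
by rewrite sn => i_n; have := st (Ordinal i_n); rewrite !ffunE.
Qed.

Definition mirror (x : config d n) : config d n := [ffun i : 'I_n => x (rev_ord i)].

Lemma mirrorE x i : mirror x i = x (rev_ord i).
Proof. exact: ffunE. Qed.

Lemma mirrorK : involutive mirror.
Proof. by move=> x; apply/ffunP => i; rewrite mirrorE mirrorE rev_ordK. Qed.

Lemma cell_mirror x k : (k < n)%N -> cell (mirror x) k = cell x (n - k.+1).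
Proof.
by move=> kn; rewrite -[k]/(nat_of_ord (Ordinal kn)) cell_ord mirrorE -cell_ord.
Qed.

Lemma eq_config_from_right (x y : config d n) :
  (forall i : 'I_n, cell x i.+1 = cell y i.+1 -> x i = y i) -> x = y.
Proof.
move=> step; suff eq_cell m k : (n <= k + m)%N -> cell x k = cell y k.
  by apply/ffunP => i; rewrite -!cell_ord (eq_cell n) ?leq_addl.
elim: m k => [|m IHm] k; first by rewrite addn0 => nk; rewrite !cell_out.
case: (ltnP k n) => [kn nkm | nk _]; last by rewrite !cell_out.
rewrite -[k]/(nat_of_ord (Ordinal kn)) !cell_ord; apply: step.
by apply: IHm; rewrite addSnnS.
Qed.

End Configurations.

Section GlobalMap.
Variables (d : nat) (c0 c1 c2 c3 c4 c5 c6 c7 : 'Z_d).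
Local Notation rule := (fdca_rule c0 c1 c2 c3 c4 c5 c6 c7).
Local Notation global := (fdca_global c0 c1 c2 c3 c4 c5 c6 c7).
Local Notation reversible n := (fdca_reversible n c0 c1 c2 c3 c4 c5 c6 c7).

Lemma fdca_globalE n (x : config d n) (i : 'I_n) :
  global x i = rule (if nat_of_ord i is k.+1 then cell x k else 0) (x i) (cell x i.+1).
Proof. exact: ffunE. Qed.

(* [(0 :: s)`_i] is the left neighbour of cell [i], null at [i = 0]. *)
Lemma fdca_global_config_of_seq n s (i : 'I_n) : (size s <= n)%N ->
  global (config_of_seq n s) i = rule (0 :: s)`_i s`_i s`_i.+1.
Proof.
move=> sn; rewrite fdca_globalE cell_config_of_seq // ffunE.
by case: i => [[|k] ?] /=; rewrite ?cell_config_of_seq.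
Qed.

Lemma collision_not_reversible s t : size s = size t -> s != t ->
  (forall i, (i < size s)%N ->
     rule (0 :: s)`_i s`_i s`_i.+1 = rule (0 :: t)`_i t`_i t`_i.+1) ->
  ~ reversible (size s).
Proof.
move=> st /eqP neq_st eq_rule /bij_inj global_inj; apply: neq_st.
apply: (@config_of_seq_inj d (size s)) => //; apply: global_inj.
apply/ffunP => i; rewrite !fdca_global_config_of_seq ?st //; exact: eq_rule.
Qed.

Lemma fdca_rule_mirror x y z : fdca_rule c0 c3 c2 c1 c6 c5 c4 c7 x y z = rule z y x.
Proof. by rewrite /fdca_rule; ring. Qed.

Lemma fdca_global_mirror n (x : config d n) :
  fdca_global c0 c3 c2 c1 c6 c5 c4 c7 (mirror x) = mirror (global x).
Proof.
apply/ffunP => i; rewrite mirrorE [LHS]ffunE fdca_rule_mirror fdca_globalE.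
rewrite [mirror x i]mirrorE.
have -> : cell (mirror x) i.+1 =
          (if nat_of_ord (rev_ord i) is k.+1 then cell x k else 0).
  case: (ltnP i.+1 n) => [i1n | ni1]; first by rewrite cell_mirror //= -(subnSK i1n).
  by rewrite cell_out //= (_ : n - i.+1 = 0)%N //; lia.
suff -> : (if nat_of_ord i is k.+1 then cell (mirror x) k else 0) =
          cell x (rev_ord i).+1 by [].
case: i => [[|k] /= kn]; last by rewrite cell_mirror 1?ltnW // (subnSK kn).
by rewrite subn1 prednK ?cell_out.
Qed.

Lemma fdca_reversible_mirror n :
  reversible n -> fdca_reversible n c0 c3 c2 c1 c6 c5 c4 c7.
Proof.
move=> rev; have mirror_bij := inv_bij (@mirrorK d n).
apply: (eq_bij (bij_comp mirror_bij (bij_comp rev mirror_bij))) => x /=.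
by rewrite -fdca_global_mirror mirrorK.
Qed.

Lemma reversible1_c5_neq0 : reversible 1 -> c5 != 0.
Proof.
move=> rev; apply/negP => /eqP c5_0.
apply: (collision_not_reversible (s := [:: 0]) (t := [:: 1])) rev => //.
by move=> [|i] // _; rewrite /fdca_rule /= c5_0; ring.
Qed.

Lemma reversible_of_c4_eq0 (c0_0 : c0 = 0) (c1_0 : c1 = 0) (c2_0 : c2 = 0)
  (c3_0 : c3 = 0) (c4_0 : c4 = 0) :
  c5 \is a GRing.unit -> forall n, reversible n.
Proof.
move=> c5_unit n; apply: injF_bij => x y Gxy; apply: eq_config_from_right => i xy_next.
have rule_c5c6 a b c : rule a b c = c5 * b + (c6 * c + c7).
  by rewrite /fdca_rule c0_0 c1_0 c2_0 c3_0 c4_0; ring.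
have := congr1 (fun z : config d n => z i) Gxy.
rewrite /= !fdca_globalE !rule_c5c6 xy_next.
by move=> /addIr /(mulrI c5_unit).
Qed.

End GlobalMap.

Lemma Zp_unit_prime d : prime d -> forall x : 'Z_d, x != 0 -> x \is a GRing.unit.
Proof.
move=> d_prime x x_neq0; have d_gt1 := prime_gt1 d_prime.
have x_lt_d : (x < d)%N by have := ltn_ord x; rewrite [X in (_ < X)%N -> _]Zp_cast.
rewrite -[x]natr_Zp unitZpE // prime_coprime // gtnNdvd //.
by rewrite lt0n; apply: contra x_neq0 => /eqP x0; apply/eqP/val_inj.
Qed.

Section Obstructions.
Variables (d : nat) (c0 c1 c2 c3 c4 c5 c6 c7 : 'Z_d).
Hypothesis d_prime : prime d.
Local Notation reversible n := (fdca_reversible n c0 c1 c2 c3 c4 c5 c6 c7).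
Local Notation unitP := (Zp_unit_prime d_prime).

Lemma reversible2_c3_eq0 : reversible 2 -> c3 = 0.
Proof.
move=> rev; apply/eqP/negPn/negP => c3_neq0.
have [p c6E] : exists p, c6 = p * c3 by exists (c6 / c3); rewrite divrK ?unitP.
have [q c5E] : exists q, c5 = q * c3 by exists (c5 / c3); rewrite divrK ?unitP.
(* The first cell is c3 (x0 + p) (x1 + q) - c3 p q + c7, hence constant on
   configurations with x0 = -p or x1 = -q. *)
have [e c5E'] : exists e, c5 = c1 * p + e by exists (c5 - c1 * p); rewrite addrC subrK.
have [e0 | e_neq0] := eqVneq e 0.
  apply: (collision_not_reversible (s := [:: -p; 0]) (t := [:: -p; 1])) rev => //.
    by rewrite !eqseq_cons eqxx eq_sym oner_eq0.
  by move=> [|[|i]] // _; rewrite /fdca_rule /=; ring: c6E c5E' e0.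
pose b := ((c4 - c1 * q) * (1 - p) - c5 * q + c4 * p) / e.
have bE : e * b = (c4 - c1 * q) * (1 - p) - c5 * q + c4 * p.
  by rewrite mulrC divrK ?unitP.
apply: (collision_not_reversible (s := [:: 1 - p; -q]) (t := [:: -p; b])) rev => //.
  by rewrite eqseq_cons -subr_eq0 opprK subrK oner_eq0.
move=> [|[|i]] // _; rewrite /fdca_rule /=.
  by ring: c6E c5E.
by ring: c5E' bE.
Qed.

Lemma reversible3_c6_eq0 (c1_0 : c1 = 0) (c3_0 : c3 = 0) (m : 'Z_d) :
  c0 * m + c2 \is a GRing.unit -> reversible 3 -> c6 = 0.
Proof.
move=> u_unit rev; apply/eqP/negPn/negP => c6_neq0.
set u := c0 * m + c2 in u_unit; have uE : c0 * m = u - c2 by rewrite addrK.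
pose t := (c5 * c5 - c4 * c6 - c4 * c6) / (c6 * u).
have tE : c6 * u * t = c5 * c5 - c4 * c6 - c4 * c6.
  by rewrite mulrC divrK // unitrM unitP.
clearbody u t.
(* The difference (c6, -c5, c4) kills the linear part of both boundary cells;
   t compensates the middle cell through the nonlinear term. *)
apply: (collision_not_reversible (s := [:: 0; m - c5; c4 + t])
                                 (t := [:: -c6; m; t])) rev => //.
  by rewrite eqseq_cons eq_sym oppr_eq0 (negbTE c6_neq0).
by move=> [|[|[|i]]] // _; rewrite /fdca_rule /= c1_0 c3_0; ring: tE uE.
Qed.

Lemma reversible3_c0_eq0 (c1_0 : c1 = 0) (c3_0 : c3 = 0) (c4_0 : c4 = 0)
  (c6_0 : c6 = 0) : reversible 3 -> c0 = 0.
Proof.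
move=> rev; apply/eqP/negPn/negP => c0_neq0.
have [w c5E] : exists w, c5 = - (c0 * w).
  by exists (- (c5 / c0)); rewrite mulrN opprK mulrC divrK ?unitP.
apply: (collision_not_reversible (s := [:: 1; 0; w]) (t := [:: 1; 1; w])) rev => //.
by move=> [|[|[|i]]] // _; rewrite /fdca_rule /= c1_0 c3_0 c4_0 c6_0; ring: c5E.
Qed.

Lemma reversible4_c2_eq0 (c0_0 : c0 = 0) (c1_0 : c1 = 0) (c3_0 : c3 = 0)
  (c4_0 : c4 = 0) (c6_0 : c6 = 0) : reversible 4 -> c2 = 0.
Proof.
move=> rev; apply/eqP/negPn/negP => c2_neq0.
have [r c5E] : exists r, c5 = r * c2 by exists (c5 / c2); rewrite divrK ?unitP.
apply: (collision_not_reversible (s := [:: 1; 0; 0; r * r])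
                                 (t := [:: 1; c2; -c5; r * r])) rev => //.
  by rewrite !eqseq_cons eqxx eq_sym (negbTE c2_neq0).
by move=> [|[|[|[|i]]]] // _; rewrite /fdca_rule /= c0_0 c1_0 c3_0 c4_0 c6_0; ring: c5E.
Qed.

Lemma reversible_c4_or_c6_eq0 (c0_0 : c0 = 0) (c1_0 : c1 = 0) (c2_0 : c2 = 0)
  (c3_0 : c3 = 0) : (forall n, (0 < n)%N -> reversible n) -> c4 = 0 \/ c6 = 0.
Proof.
move=> rev; have [|c4_neq0] := eqVneq c4 0; [by left | right].
apply/eqP/negPn/negP => c6_neq0.
pose T (ab : 'Z_d * 'Z_d) := (ab.2, - (c4 * ab.1 + c5 * ab.2) / c6).
have T_inj : injective T.
  move=> [a1 b1] [a2 b2] T12; have /= b12 := congr1 fst T12; subst b2.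
  have /= := congr1 (fun ab => - (ab.2 * c6)) T12.
  by rewrite !divrK ?unitP // !opprK => /addIr /(mulrI (unitP c4_neq0)) ->.
pose q k := iter k T (0, 1).
have q_rec k : c6 * (q k.+1).2 = - (c4 * (q k).1 + c5 * (q k).2).
  by rewrite /= mulrC divrK ?unitP.
pose n := (order T (0, 1)).-1.
have q_period : q n.+1 = (0, 1) by rewrite /q /n orderSpred iter_order.
have n_gt0 : (0 < n)%N.
  rewrite lt0n; apply/eqP => n0; move: q_period; rewrite n0 => -[] /eqP.
  by rewrite oner_eq0.
pose s := mkseq (fun k => (q k).2) n.
have := rev n n_gt0; rewrite -{1}(size_mkseq (fun k => (q k).2) n).
apply: (collision_not_reversible (s := s) (t := nseq n 0)).
- by rewrite size_mkseq size_nseq.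
- apply/eqP => /(congr1 (nth 0 ^~ 0%N)) /eqP.
  by rewrite nth_mkseq // nth_nseq n_gt0 oner_eq0.
move=> i; rewrite size_mkseq => i_n.
have -> : (0 :: s)`_i = (q i).1.
  by case: i i_n => [|j] // j_n; rewrite /= nth_mkseq // ltnW.
have -> : s`_i = (q i).2 by rewrite nth_mkseq.
have -> : s`_i.+1 = (q i.+1).2.
  case: (ltnP i.+1 n) => [|n_le]; first exact: nth_mkseq.
  have <- : n = i.+1 by lia.
  by rewrite nth_default ?size_mkseq // -[(q n).2]/(q n.+1).1 q_period.
change (0 :: nseq n 0) with (nseq n.+1 (0 : 'Z_d)); rewrite !nth_nseq !if_same.
by rewrite /fdca_rule c0_0 c1_0 c2_0 c3_0; ring: (q_rec i).
Qed.

End Obstructions.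

Section Classification.
Variables (d : nat) (c0 c1 c2 c3 c4 c5 c6 c7 : 'Z_d).
Hypothesis d_prime : prime d.
Local Notation reversible n := (fdca_reversible n c0 c1 c2 c3 c4 c5 c6 c7).

Lemma reversible2_c1_eq0 : reversible 2 -> c1 = 0.
Proof. by move/fdca_reversible_mirror/(reversible2_c3_eq0 d_prime). Qed.

Lemma reversible3_c4_eq0 (c1_0 : c1 = 0) (c3_0 : c3 = 0) (m : 'Z_d) :
  c0 * m + c2 \is a GRing.unit -> reversible 3 -> c4 = 0.
Proof.
by move=> u_unit /fdca_reversible_mirror; apply: reversible3_c6_eq0 u_unit.
Qed.

Lemma reversible_c0_c2_eq0 (c1_0 : c1 = 0) (c3_0 : c3 = 0) :
  reversible 3 -> reversible 4 -> c0 = 0 /\ c2 = 0.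
Proof.
move=> rev3 rev4.
have linear_eq0 : c0 != 0 \/ c2 != 0 -> c4 = 0 /\ c6 = 0.
  move=> nonlinear; have [m u_unit] : exists m, c0 * m + c2 \is a GRing.unit.
    have [c0_0 | c0_neq0] := eqVneq c0 0.
      exists 0; rewrite c0_0 mul0r add0r Zp_unit_prime //.
      by case: nonlinear => //; rewrite c0_0 eqxx.
    by exists ((1 - c2) / c0); rewrite mulrC divrK ?subrK ?unitr1 // Zp_unit_prime.
  split; first exact: reversible3_c4_eq0 u_unit rev3.
  exact: reversible3_c6_eq0 u_unit rev3.
have c0_0 : c0 = 0.
  have [//|c0_neq0] := eqVneq c0 0.
  have [c4_0 c6_0] := linear_eq0 (or_introl c0_neq0).
  exact: reversible3_c0_eq0 rev3.
split=> //; have [//|c2_neq0] := eqVneq c2 0.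
have [c4_0 c6_0] := linear_eq0 (or_intror c2_neq0).
exact: reversible4_c2_eq0 rev4.
Qed.

Lemma reversible_of_c6_eq0 (c0_0 : c0 = 0) (c1_0 : c1 = 0) (c2_0 : c2 = 0)
  (c3_0 : c3 = 0) (c6_0 : c6 = 0) :
  c5 \is a GRing.unit -> forall n, reversible n.
Proof.
by move=> c5_unit n; apply: fdca_reversible_mirror; apply: reversible_of_c4_eq0.
Qed.

End Classification.

Theorem corollary1 (d : nat) (hd : prime d) (c0 c1 c2 c3 c4 c5 c6 c7 : 'Z_d) :
  (forall n : nat, (0 < n)%N -> fdca_reversible n c0 c1 c2 c3 c4 c5 c6 c7) <->
  c0 = 0 /\ c1 = 0 /\ c2 = 0 /\ c3 = 0 /\ (c4 = 0 \/ c6 = 0) /\ c5 != 0.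
Proof.
split=> [rev | [c0_0 [c1_0 [c2_0 [c3_0 [c4c6_0 c5_neq0]]]]] n _].
  have c5_neq0 := reversible1_c5_neq0 (rev 1%N isT).
  have c3_0 := reversible2_c3_eq0 hd (rev 2%N isT).
  have c1_0 := reversible2_c1_eq0 hd (rev 2%N isT).
  have [c0_0 c2_0] := reversible_c0_c2_eq0 hd c1_0 c3_0 (rev 3%N isT) (rev 4%N isT).
  by do !split=> //; exact: reversible_c4_or_c6_eq0 hd c0_0 c1_0 c2_0 c3_0 rev.
have c5_unit := Zp_unit_prime hd c5_neq0.
by case: c4c6_0 => [c4_0 | c6_0];
  [exact: reversible_of_c4_eq0 | exact: reversible_of_c6_eq0].
Qed.
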